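(* Let $n$ be a security parameter and $F\colon\{0,1\}^{\tilde n}\to\{0,1\}^m$ a function. For $t\in\mathrm{poly}(n)$ let $F^t(x_1,\ldots,x_t)=(F(x_1),\ldots,F(x_t))$ be the $t$-fold direct product of $F$. Then: (i) if $F^{-1}$ has real Shannon entropy at least $k$, then $(F^t)^{-1}$ has real min-entropy at least $t\cdot k-\tilde n\sqrt{st}$ for any $s=\omega(\log n)$ and $t>s$; (ii) if $F^{-1}$ has accessible average max-entropy at most $k$, then $(F^t)^{-1}$ has accessible max-entropy at most $t\cdot k+\tilde n\sqrt{st}$ for any $s=\omega(\log n)$.
   Context: For a function $G$ with domain $\{0,1\}^N$ and $X$ uniform on it: $G^{-1}$ has real Shannon entropy at least $k$ if $H(X\mid G(X))\ge k$. $G^{-1}$ has real min-entropy at least $k$ if there is a negligible $\varepsilon(n)$ with $\Pr_x[\log|G^{-1}(G(x))|\ge k]\ge1-\varepsilon(n)$. A $G$-collision-finder is a randomized algorithm $A$ with $A(x;r)\in G^{-1}(G(x))$ for all $x,r$; $R$ denotes uniform coins of $A$. $G^{-1}$ has accessible average max-entropy at most $k$ if for every probabilistic polynomial-time (PPT) $G$-collision-finder $A$ there are sets $\{\mathcal{L}(x)\}$ and a negligible $\varepsilon$ with $x\in\mathcal{L}(x)$, $\mathbb{E}[\log|\mathcal{L}(X)|]\le k$, and $\Pr[A(X;R)\in\mathcal{L}(X)]\ge1-\varepsilon(n)$ for all sufficiently large $n$. $G^{-1}$ has accessible max-entropy at most $k$ if for every PPT $G$-collision-finder $A$ there are sets $\{\mathcal{L}(x)\}$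 each of size at most $2^k$, with $x\in\mathcal{L}(x)$, and a negligible $\varepsilon$ such that $\Pr[A(X;R)\in\mathcal{L}(X)]\ge1-\varepsilon(n)$ for all sufficiently large $n$. *)

From HB Require Import structures.
From mathcomp Require Import all_boot all_order all_algebra.
From mathcomp Require Import all_classical all_reals all_analysis.
From mathcomp Require Import Rstruct.
Set Implicit Arguments. Unset Strict Implicit. Unset Printing Implicit Defensive.
Import Order.TTheory GRing.Theory Num.Theory.
Local Open Scope ring_scope.

Notation R := Rdefinitions.R.

Definition log2 (x : R) : R := ln x / ln 2.

Definition prob (T : finType) (P : pred T) : R :=
  #|[set x | P x]|%:R / #|T|%:R.

Definition expect (T : finType) (f : T -> R) : R :=
  (\sum_(x : T) f x) / #|T|%:R.

(* Shannon conditional entropy H(X|Y) of a joint distribution p(x,y) *)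
Definition cond_entropy (T U : finType) (p : T -> U -> R) : R :=
  \sum_(x : T) \sum_(y : U)
     (if p x y == 0 then 0 else p x y * log2 ((\sum_(x' : T) p x' y) / p x y)).

Definition joint_unif (T U : finType) (G : T -> U) (x : T) (y : U) : R :=
  if G x == y then #|T|%:R^-1 else 0.

Definition preim_card (T : finType) (U : eqType) (G : T -> U) (x : T) : nat :=
  #|[set y | G y == G x]|.

Definition negligible (eps : nat -> R) : Prop :=
  forall c : nat, exists n0 : nat, forall n : nat, (n0 <= n)%N ->
    `|eps n| <= ((n%:R) ^+ c)^-1.

Definition poly_bounded (t : nat -> nat) : Prop :=
  exists c : nat, forall n : nat, (t n <= n ^ c + c)%N.

Definition omega_log (s : nat -> R) : Prop :=
  forall c : R, 0 < c -> exists n0 : nat, forall n : nat, (n0 <= n)%N ->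
    c * ln (n%:R) < s n.

Definition real_shannon_ge (D C : nat -> finType) (G : forall n, D n -> C n)
    (k : nat -> R) : Prop :=
  forall n, k n <= cond_entropy (joint_unif (G n)).

Definition real_minent_ge (D C : nat -> finType) (G : forall n, D n -> C n)
    (k : nat -> R) : Prop :=
  exists eps : nat -> R, negligible eps /\
    forall n, 1 - eps n <= prob (fun x : D n => k n <= log2 (preim_card (G n) x)%:R).

(* randomized algorithms A(x; r), with uniform coins r in a finite type *)
Record rand_alg (D : nat -> finType) := RandAlg {
  coins : nat -> finType ;
  run : forall n, D n -> coins n -> D n }.

Definition collision_finder (D C : nat -> finType) (G : forall n, D n -> C n)
    (A : rand_alg D) : Prop :=
  forall n (x : D n) (r : coins A n), G n (@run D A n x r) = G n x.

Definition succ_prob (D : nat -> finType) (A : rand_alg D)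
    (L : forall n, D n -> {set D n}) (n : nat) : R :=
  prob (fun p : D n * coins A n => @run D A n p.1 p.2 \in L n p.1).

(* an abstract class of efficient (PPT) algorithms, for every domain family *)
Definition eff_class := forall D : nat -> finType, rand_alg D -> Prop.

Definition acc_avg_maxent_le (Eff : eff_class) (D C : nat -> finType)
    (G : forall n, D n -> C n) (k : nat -> R) : Prop :=
  forall A : rand_alg D, Eff D A -> collision_finder G A ->
    exists (L : forall n, D n -> {set D n}) (eps : nat -> R),
      [/\ forall n (x : D n), x \in L n x,
          forall n, expect (fun x : D n => log2 #|L n x|%:R) <= k n,
          negligible eps &
          exists n0 : nat, forall n, (n0 <= n)%N -> 1 - eps n <= succ_prob A L n].

Definition acc_maxent_le (Eff : eff_class) (D C : nat -> finType)
    (G : forall n, D n -> C n) (k : nat -> R) : Prop :=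
  forall A : rand_alg D, Eff D A -> collision_finder G A ->
    exists (L : forall n, D n -> {set D n}) (eps : nat -> R),
      [/\ forall n (x : D n), x \in L n x,
          forall n (x : D n), #|L n x|%:R <= 2 `^ (k n),
          negligible eps &
          exists n0 : nat, forall n, (n0 <= n)%N -> 1 - eps n <= succ_prob A L n].

Definition bits (l : nat) : finType := l.-tuple bool.

Definition tfold (t : nat) (T : finType) : finType := t.-tuple T.

Definition direct_product (nt m t : nat -> nat)
    (F : forall n, bits (nt n) -> bits (m n)) :
    forall n, tfold (t n) (bits (nt n)) -> tfold (t n) (bits (m n)) :=
  fun n xs => map_tuple (F n) xs.

(* the reduction: embed the input x at a uniformly random position i of a
   t-tuple of otherwise uniform inputs, run A, output the i-th coordinate *)
Definition embed_alg (nt t : nat -> nat)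
    (A : rand_alg (fun n => tfold (t n) (bits (nt n)))) : rand_alg (fun n => bits (nt n)) :=
  @RandAlg (fun n => bits (nt n))
    (fun n => ('I_(t n) * (tfold (t n) (bits (nt n)) * coins A n))%type : finType)
    (fun n x c =>
       tnth (@run _ A n [tuple (if j == c.1 then x else tnth c.2.1 j) | j < t n] c.2.2) c.1).

Definition closed_under_embed (Eff : eff_class) (nt t : nat -> nat) : Prop :=
  forall A : rand_alg (fun n => tfold (t n) (bits (nt n))),
    Eff _ A -> Eff _ (embed_alg A).

From Pilot Require Import Defs.
From HB Require Import structures.
From mathcomp Require Import all_boot all_order all_algebra.
From mathcomp Require Import all_classical all_reals all_analysis.
From mathcomp Require Import Rstruct.
From mathcomp Require Import ring lra zify.
Set Implicit Arguments. Unset Strict Implicit. Unset Printing Implicit Defensive.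
Import Order.TTheory GRing.Theory Num.Theory.
Local Open Scope ring_scope.
(* mathcomp-analysis has its own, measure-theoretic, [negligible]. *)
Local Notation negligible := Defs.negligible.

(* Everything rests on a Hoeffding bound: a sum of t i.i.d. variables with
   values in [0, n~] exceeds (or falls short of) t times its mean by more than
   n~ sqrt(s t) with probability at most exp(-s/8), which is negligible when
   s = omega(log n).
   (i) The preimage of F^t(x) is the product of the preimages of the F(x_i),
   so its log-size is a sum of i.i.d. copies of log |F^-1(F(X))|, whose mean
   is H(X | F(X)) >= k.
   (ii) Planting x at a random coordinate of a random tuple turns a collision
   finder A for F^t into one for F, which gets sets L(x) of average log-size
   at most k.  For F^t use the product L(x_1) x ... x L(x_t), or {x} when this
   product has more than 2^(tk + n~ sqrt(st)) elements, which by Hoeffding is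
   rare.  A leaves the product only if some coordinate leaves its L(x_i), and
   by the union bound this costs t times the failure probability of the
   reduction. *)

Section UniformProbability.
Variable T : finType.
Implicit Types (P Q : pred T) (f g : T -> R).

Lemma natr_card (A : {pred T}) : #|A|%:R = \sum_x (x \in A)%:R :> R.
Proof.
rewrite -sum1_card natr_sum big_mkcond /=.
by apply: eq_bigr => x _; case: (x \in A).
Qed.

Lemma probE P : prob P = (\sum_x (P x)%:R) / #|T|%:R.
Proof. by rewrite /prob natr_card; under eq_bigr do rewrite inE. Qed.

Lemma prob_ge0 P : 0 <= prob P.
Proof. by rewrite probE divr_ge0 // sumr_ge0 // => x _; case: (P x). Qed.

Lemma le_prob P Q : subpred P Q -> prob P <= prob Q.
Proof.
move=> PQ; rewrite !probE ler_wpM2r // ?invr_ge0 // ler_sum // => x _.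
by case: (boolP (P x)) => [/PQ -> //|_]; case: (Q x).
Qed.

Lemma prob_pred0 P : (forall x, ~~ P x) -> prob P = 0.
Proof. by move=> nP; rewrite probE big1 ?mul0r // => x _; rewrite (negbTE (nP x)). Qed.

Lemma probU P Q : prob (fun x => P x || Q x) <= prob P + prob Q.
Proof.
rewrite !probE -mulrDl ler_wpM2r // ?invr_ge0 // -big_split ler_sum // => x _.
by case: (P x); case: (Q x) => /=; lra.
Qed.

Lemma prob_bigU (I : finType) (Q : I -> pred T) :
  prob (fun x => [exists i, Q i x]) <= \sum_i prob (Q i).
Proof.
under eq_bigr do rewrite probE.
rewrite -mulr_suml probE ler_wpM2r // ?invr_ge0 // exchange_big ler_sum // => x _.
case: (boolP [exists i, Q i x]) => [/existsP [i Qix]|_].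
  by rewrite (bigD1 i) //= Qix lerDl sumr_ge0 // => j _; case: (Q j x).
by rewrite sumr_ge0 // => i _; case: (Q i x).
Qed.

Lemma probC P : (0 < #|T|)%N -> prob (fun x => ~~ P x) = 1 - prob P.
Proof.
move=> T0; rewrite !probE.
have -> : \sum_x ((~~ P x)%:R : R) = \sum_x (1 - (P x)%:R).
  by apply: eq_bigr => x _; case: (P x) => /=; lra.
by rewrite sumrB sumr_const mulrBl -[#|T|%:R]mulr1n divff // pnatr_eq0 -lt0n.
Qed.

Lemma prob_gt0_card P : 0 < prob P -> (0 < #|T|)%N.
Proof. by rewrite lt0n; apply: contraTneq => T0; rewrite /prob T0 invr0 mulr0 ltxx. Qed.

Lemma expect_ge0 f : (forall x, 0 <= f x) -> 0 <= expect f.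
Proof. by move=> f0; rewrite divr_ge0 // sumr_ge0. Qed.

Lemma expect_bounds f (B : R) :
  (0 < #|T|)%N -> (forall x, 0 <= f x <= B) -> 0 <= expect f <= B.
Proof.
move=> T0 fB; rewrite expect_ge0 => [|x]; last by case/andP: (fB x).
rewrite ler_pdivrMr ?ltr0n // mulr_natr -sumr_const ler_sum // => x _.
by case/andP: (fB x).
Qed.

Lemma expect_cst (c : R) : (0 < #|T|)%N -> expect (fun _ : T => c) = c.
Proof.
move=> T0; rewrite /expect sumr_const -[_ *+ _]mulr_natr (@eq_card _ _ T) //.
by rewrite mulfK // pnatr_eq0 -lt0n.
Qed.

Lemma prob_cst (b : bool) : (0 < #|T|)%N -> prob (fun _ : T => b) = b%:R.
Proof. by move=> T0; rewrite probE; exact: expect_cst. Qed.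

Lemma expect_affine (c a : R) f :
  (0 < #|T|)%N -> expect (fun x => c + a * f x) = c + a * expect f.
Proof.
move=> T0; rewrite /expect big_split /= -mulr_sumr mulrDl mulrA.
by congr (_ + _); exact: expect_cst.
Qed.

Lemma le_expect f g : (forall x, f x <= g x) -> expect f <= expect g.
Proof. by move=> fg; rewrite ler_wpM2r ?invr_ge0 // ler_sum. Qed.

Lemma markov_expR f (c lam : R) : 0 <= lam ->
  prob (fun x => c < f x) * expR (lam * c) <= expect (fun x => expR (lam * f x)).
Proof.
move=> lam0; rewrite probE mulrAC ler_wpM2r ?invr_ge0 // mulr_suml ler_sum // => x _.
case: ltrP => cf; last by rewrite mul0r expR_ge0.
by rewrite mul1r ler_expR ler_wpM2l // ltW.
Qed.

End UniformProbability.

Lemma prob_pair (I U : finType) (P : I -> pred U) :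
  prob (fun q : I * U => P q.1 q.2) = (\sum_i prob (P i)) / #|I|%:R.
Proof.
rewrite probE -(pair_bigA _ (fun i y => (P i y)%:R)) card_prod natrM invfM mulrA.
by under [in RHS]eq_bigr do rewrite probE; rewrite -mulr_suml mulrAC.
Qed.

Lemma prob_fst (T U : finType) (Q : pred T) : (0 < #|U|)%N ->
  prob (fun p : T * U => Q p.1) = prob Q.
Proof.
move=> U0; rewrite (prob_pair (fun x (_ : U) => Q x)) probE.
by under eq_bigr do rewrite prob_cst //.
Qed.

Lemma prob_reindex (T U : finType) (h : T -> U) (P : pred U) :
  bijective h -> prob (fun x => P (h x)) = prob P.
Proof.
move=> hb; rewrite !probE (bij_eq_card hb) [in RHS](reindex h) //.
exact: onW_bij.
Qed.

Section Tuples.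
Variables (T : finType) (t : nat).

Lemma sum_tuple_prod (g : 'I_t -> T -> R) :
  \sum_(xs : t.-tuple T) \prod_i g i (tnth xs i) = \prod_i \sum_x g i x.
Proof.
rewrite bigA_distr_bigA (reindex (fun f : {ffun 'I_t -> T} => [tuple f i | i < t])) /=.
  by apply: eq_bigr => f _; apply: eq_bigr => i _; rewrite tnth_mktuple.
exists (fun xs : t.-tuple T => [ffun i => tnth xs i]) => f _.
  by apply/ffunP => i; rewrite ffunE tnth_mktuple.
by apply: eq_from_tnth => i; rewrite tnth_mktuple ffunE.
Qed.

Lemma expect_tuple_prod (g : 'I_t -> T -> R) :
  expect (fun xs : t.-tuple T => \prod_i g i (tnth xs i)) = \prod_i expect (g i).
Proof.
by rewrite /expect sum_tuple_prod card_tuple natrX prodf_div prodr_const card_ord.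
Qed.

Definition setX_tuple (A : 'I_t -> {set T}) : {set t.-tuple T} :=
  [set xs | [forall i, tnth xs i \in A i]].

Lemma card_setX_tuple (A : 'I_t -> {set T}) : #|setX_tuple A| = (\prod_i #|A i|)%N.
Proof.
apply/eqP; rewrite -(eqr_nat R) natr_prod natr_card.
under [in X in _ == X]eq_bigr do rewrite natr_card.
rewrite -sum_tuple_prod; apply/eqP/eq_bigr => xs _; rewrite inE.
case: (boolP [forall i, _]) => [/forallP inA|].
  by rewrite big1 // => i _; rewrite inA.
by rewrite negb_forall => /existsP [i niA]; rewrite (bigD1 i) //= (negbTE niA) mul0r.
Qed.

Definition set_tnth (ys : t.-tuple T) (i : 'I_t) (x : T) : t.-tuple T :=
  [tuple (if j == i then x else tnth ys j) | j < t].

Lemma tnth_set_tnth ys i x j : tnth (set_tnth ys i x) j = if j == i then x else tnth ys j.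
Proof. by rewrite tnth_mktuple. Qed.

Lemma set_tnth_tnth ys i : set_tnth ys i (tnth ys i) = ys.
Proof. by apply: eq_from_tnth => j; rewrite tnth_set_tnth; case: eqP => [->|]. Qed.

Lemma set_tnthK ys i x y : set_tnth (set_tnth ys i x) i y = set_tnth ys i y.
Proof. by apply: eq_from_tnth => j; rewrite !tnth_set_tnth; case: (j == i). Qed.

Lemma prob_set_tnth (C : finType) (i : 'I_t) (P : t.-tuple T -> C -> bool) : (0 < #|T|)%N ->
  prob (fun q : T * (t.-tuple T * C) => P (set_tnth q.2.1 i q.1) q.2.2)
  = prob (fun p : t.-tuple T * C => P p.1 p.2).
Proof.
move=> T0; pose h (q : T * (t.-tuple T * C)) := ((set_tnth q.2.1 i q.1, q.2.2), tnth q.2.1 i).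
have hb : bijective h.
  exists (fun p => (tnth p.1.1 i, (set_tnth p.1.1 i p.2, p.1.2))) => [[x [ys r]]|[[zs r] y]] /=;
  by rewrite /h /= tnth_set_tnth eqxx set_tnthK set_tnth_tnth.
rewrite -(prob_fst (fun p : t.-tuple T * C => P p.1 p.2) T0).
exact: (prob_reindex (fun p => P p.1.1 p.1.2) hb).
Qed.

End Tuples.

Lemma expR_le_quadratic (y : R) : y <= 1/2 -> expR y <= 1 + y + 2 * y ^+ 2.
Proof.
move=> y_le.
have y1 : 0 < 1 - y by lra.
have -> : expR y = (expR (- y))^-1 by rewrite expRN invrK.
apply: (@le_trans _ _ ((1 - y)^-1)).
  by rewrite lef_pV2 ?posrE ?expR_gt0 // expR_ge1Dx.
rewrite -(@ler_pM2r _ (1 - y)) // mulVf ?gt_eqF //.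
have : 0 <= y ^+ 2 * (1 - 2 * y) by apply: mulr_ge0; [exact: sqr_ge0 | lra].
nra.
Qed.

Section Hoeffding.
Variables (T : finType) (t : nat).
Hypothesis T0 : (0 < #|T|)%N.

Lemma expect_expR_sum_tuple (g : T -> R) (lam : R) :
  expect (fun xs : t.-tuple T => expR (lam * \sum_i g (tnth xs i)))
  = expect (fun x => expR (lam * g x)) ^+ t.
Proof.
have -> : (fun xs : t.-tuple T => expR (lam * \sum_i g (tnth xs i)))
          = (fun xs => \prod_i expR (lam * g (tnth xs i))).
  by apply: funext => xs; rewrite mulr_sumr expR_sum.
by rewrite (expect_tuple_prod (fun _ x => expR (lam * g x))) prodr_const card_ord.
Qed.

Lemma expect_expR_centered (g : T -> R) (B lam : R) :
  expect g = 0 -> (forall x, `|g x| <= B) -> 0 <= lam -> lam * B <= 1/2 ->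
  expect (fun x => expR (lam * g x)) <= expR (2 * (lam * B) ^+ 2).
Proof.
move=> g0 gB lam0 lamB.
have step x : expR (lam * g x) <= (1 + 2 * (lam * B) ^+ 2) + lam * g x.
  have : `|lam * g x| <= lam * B by rewrite normrM ger0_norm // ler_wpM2l.
  rewrite ler_norml => /andP [lo hi].
  apply: (le_trans (expR_le_quadratic _)); first lra.
  nra.
apply: le_trans (le_expect step) _.
by rewrite expect_affine // g0 mulr0 addr0 expR_ge1Dx.
Qed.

Lemma chernoff_sum_tuple (g : T -> R) (B lam c : R) :
  expect g = 0 -> (forall x, `|g x| <= B) -> 0 <= lam -> lam * B <= 1/2 ->
  prob (fun xs : t.-tuple T => c < \sum_i g (tnth xs i))
    <= expR (t%:R * (2 * (lam * B) ^+ 2) - lam * c).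
Proof.
move=> g0 gB lam0 lamB.
have := markov_expR (fun xs : t.-tuple T => \sum_i g (tnth xs i)) c lam0.
rewrite expect_expR_sum_tuple exp.expRD expRN ler_pdivlMr ?expR_gt0 // => /le_trans; apply.
rewrite expRM_natl lerXn2r ?nnegrE ?expR_ge0 ?expect_expR_centered //.
by rewrite expect_ge0 // => x; rewrite expR_ge0.
Qed.

Lemma hoeffding_centered (g : T -> R) (B s : R) :
  expect g = 0 -> (forall x, `|g x| <= B) -> 0 <= s ->
  prob (fun xs : t.-tuple T => B * Num.sqrt (s * t%:R) < \sum_i g (tnth xs i))
    <= expR (- (s / 8)).
Proof.
move=> g0 gB s0; set a := Num.sqrt (s * t%:R).
have [x0 _] : exists x : T, x \in T by apply/card_gt0P.
have B0 : 0 <= B := le_trans (normr_ge0 _) (gB x0).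
have a0 : 0 <= a := sqrtr_ge0 _.
have sum_le (xs : t.-tuple T) : \sum_i g (tnth xs i) <= t%:R * B.
  apply: le_trans (ler_sum _ (fun i _ => le_trans (ler_norm _) (gB (tnth xs i)))) _.
  by rewrite sumr_const card_ord mulr_natl.
have [tB_le|Ba_lt] := lerP (t%:R * B) (B * a).
  by rewrite prob_pred0 ?expR_ge0 // => xs; rewrite -leNgt (le_trans (sum_le xs)).
have B_gt0 : 0 < B.
  by rewrite lt0r B0 andbT; apply: contraTneq Ba_lt => ->; rewrite mulr0 mul0r ltxx.
have t_gt0 : 0 < t%:R :> R by move: Ba_lt; rewrite [B * a]mulrC ltr_pM2r //; apply: le_lt_trans.
have a_lt : a < t%:R by move: Ba_lt; rewrite [B * a]mulrC ltr_pM2r.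
have s_eq : s = a ^+ 2 / t%:R by rewrite sqr_sqrtr ?mulr_ge0 ?ler0n // mulfK // gt_eqF.
(* [lam * B <= 1/4] keeps [expR_le_quadratic] applicable, and the Chernoff
   exponent [2 t (lam B)^2 - lam B a] becomes [- a^2 / (8 t)]. *)
pose lam := a / (4 * t%:R * B).
have lam0 : 0 <= lam by rewrite divr_ge0 // ltW // !mulr_gt0.
have lamB : lam * B = a / (4 * t%:R) by rewrite /lam; field; rewrite !gt_eqF.
have lamB_le : lam * B <= 1/2 by rewrite lamB ler_pdivrMr ?mulr_gt0 //; lra.
have -> : - (s / 8) = t%:R * (2 * (lam * B) ^+ 2) - lam * (B * a).
  by rewrite (mulrA lam B a) lamB s_eq; field; rewrite gt_eqF.
exact: chernoff_sum_tuple.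
Qed.

Lemma hoeffding_upper (f : T -> R) (B s : R) : (forall x, 0 <= f x <= B) -> 0 <= s ->
  prob (fun xs : t.-tuple T =>
          t%:R * expect f + B * Num.sqrt (s * t%:R) < \sum_i f (tnth xs i))
    <= expR (- (s / 8)).
Proof.
move=> fB s0; have /andP [m0 mB] := expect_bounds T0 fB.
have centered : expect (fun x => - expect f + 1 * f x) = 0.
  by rewrite expect_affine // mul1r addNr.
have gB x : `|- expect f + 1 * f x| <= B.
  by case/andP: (fB x) => f0 fle; rewrite ler_norml; apply/andP; split; lra.
apply: le_trans (hoeffding_centered centered gB s0); apply: le_prob => xs /=.
by rewrite big_split /= sumr_const card_ord -mulr_sumr mul1r -[_ *+ t]mulr_natl => ?; lra.
Qed.

Lemma hoeffding_lower (f : T -> R) (B s : R) : (forall x, 0 <= f x <= B) -> 0 <= s ->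
  prob (fun xs : t.-tuple T =>
          \sum_i f (tnth xs i) < t%:R * expect f - B * Num.sqrt (s * t%:R))
    <= expR (- (s / 8)).
Proof.
move=> fB s0.
have gB x : 0 <= B + -1 * f x <= B by case/andP: (fB x) => f0 fle; apply/andP; split; lra.
apply: le_trans (hoeffding_upper gB s0); apply: le_prob => xs /=.
rewrite expect_affine // big_split /= sumr_const card_ord -mulr_sumr -[_ *+ t]mulr_natl => ?.
lra.
Qed.

End Hoeffding.

Lemma ln2_gt0 : 0 < ln (2 : R).
Proof. by apply: ln_gt0; lra. Qed.

Lemma log2_prod (I : finType) (h : I -> R) :
  (forall i, 0 < h i) -> log2 (\prod_i h i) = \sum_i log2 (h i).
Proof.
move=> h_gt0; rewrite /log2 -mulr_suml; congr (_ / _).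
suff [] : 0 < \prod_i h i /\ ln (\prod_i h i) = \sum_i ln (h i) by [].
apply: (big_rec2 (fun s p => 0 < p /\ ln p = s)); first by rewrite ln1.
by move=> i _ p _ [p_gt0 <-]; rewrite mulr_gt0 // lnM ?posrE.
Qed.

Lemma log2_natr_ge0 (c : nat) : (0 < c)%N -> 0 <= log2 c%:R.
Proof. by move=> c_gt0; rewrite divr_ge0 ?ln_ge0 ?ler1n ?(ltW ln2_gt0). Qed.

Lemma log2_natr_bounds (c l : nat) : (0 < c)%N -> (c <= 2 ^ l)%N ->
  0 <= log2 c%:R <= l%:R.
Proof.
move=> c_gt0 c_le; rewrite log2_natr_ge0 //= /log2.
rewrite ler_pdivrMr ?ln2_gt0 // [_ * ln 2]mulr_natl -lnXn // ler_ln ?posrE ?ltr0n ?exprn_gt0 //.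
by rewrite -natrX ler_nat.
Qed.

Lemma powR_lt_log2 (K x : R) : 0 < x -> 2 `^ K < x -> K < log2 x.
Proof.
move=> x_gt0 lt_x; rewrite /log2 ltr_pdivlMr ?ln2_gt0 // -ln_powR.
by rewrite ltr_ln ?posrE ?powR_gt0.
Qed.

Lemma cond_entropy_joint_unif (T U : finType) (G : T -> U) : (0 < #|T|)%N ->
  cond_entropy (joint_unif G) = expect (fun x => log2 (preim_card G x)%:R).
Proof.
move=> T0; have N0 : (#|T|%:R : R) != 0 by rewrite pnatr_eq0 -lt0n.
rewrite /cond_entropy /expect mulr_suml; apply: eq_bigr => x _.
rewrite (bigD1 (G x)) //= [X in _ + X]big1 ?addr0 => [|y yGx]; last first.
  by rewrite /joint_unif [G x == y]eq_sym (negbTE yGx) eqxx.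
rewrite /joint_unif eqxx invr_eq0 (negbTE N0) -big_mkcond sumr_const /preim_card cardsE.
by rewrite -[X in log2 (X / _)]mulr_natl mulfK ?invr_eq0 // mulrC.
Qed.

Lemma preim_card_gt0 (T : finType) (U : eqType) (G : T -> U) x : (0 < preim_card G x)%N.
Proof. by apply/card_gt0P; exists x; rewrite inE. Qed.

Lemma preim_card_map_tuple (T U : finType) t (F : T -> U) (xs : t.-tuple T) :
  preim_card (fun ys : t.-tuple T => map_tuple F ys) xs = (\prod_i preim_card F (tnth xs i))%N.
Proof.
rewrite -card_setX_tuple; apply: eq_card => ys; rewrite !inE.
apply/eqP/forallP => [FysFxs i|FysFxs]; last first.
  by apply: eq_from_tnth => i; rewrite !tnth_map; have := FysFxs i; rewrite inE => /eqP.
by rewrite inE; have := congr1 (fun zs => tnth zs i) FysFxs; rewrite !tnth_map => ->.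
Qed.

Section LogProductTails.
Variables (T : finType) (t l : nat) (w : T -> nat).
Hypotheses (T0 : (0 < #|T|)%N) (w_gt0 : forall x, (0 < w x)%N).
Hypothesis w_le : forall x, (w x <= 2 ^ l)%N.

Lemma log2_prod_tuple (xs : t.-tuple T) :
  log2 (\prod_i w (tnth xs i))%:R = \sum_i log2 (w (tnth xs i))%:R.
Proof. by rewrite natr_prod log2_prod // => i; rewrite ltr0n. Qed.

Let log2w_bounds x : 0 <= log2 (w x)%:R <= l%:R := log2_natr_bounds (w_gt0 x) (w_le x).

Lemma prob_log2_prod_lt (s : R) : 0 <= s ->
  prob (fun xs : t.-tuple T => log2 (\prod_i w (tnth xs i))%:R
          < t%:R * expect (fun x => log2 (w x)%:R) - l%:R * Num.sqrt (s * t%:R))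
    <= expR (- (s / 8)).
Proof.
move=> s0; apply: le_trans (hoeffding_lower t T0 log2w_bounds s0).
by apply: le_prob => xs /=; rewrite log2_prod_tuple.
Qed.

Lemma prob_log2_prod_gt (s : R) : 0 <= s ->
  prob (fun xs : t.-tuple T => t%:R * expect (fun x => log2 (w x)%:R)
          + l%:R * Num.sqrt (s * t%:R) < log2 (\prod_i w (tnth xs i))%:R)
    <= expR (- (s / 8)).
Proof.
move=> s0; apply: le_trans (hoeffding_upper t T0 log2w_bounds s0).
by apply: le_prob => xs /=; rewrite log2_prod_tuple.
Qed.

End LogProductTails.

Section Negligible.
Local Open Scope classical_set_scope.
Implicit Types e f : nat -> R.

Lemma eventuallyE (P : nat -> Prop) :
  (\forall n \near \oo, P n) <-> exists n0, forall n, (n0 <= n)%N -> P n.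
Proof. by split=> [[n0 _ Pn]|[n0 Pn]]; exists n0. Qed.

Lemma negligibleE e :
  negligible e <-> forall c : nat, \forall n \near \oo, `|e n| <= (n%:R ^+ c)^-1.
Proof. by split=> ne c; apply/eventuallyE; exact: ne. Qed.

Lemma negligible_le e f : negligible e -> (\forall n \near \oo, `|f n| <= e n) -> negligible f.
Proof.
move=> /negligibleE ne fe; apply/negligibleE => c; near=> n.
have fen : `|f n| <= e n by near: n.
have enc : `|e n| <= (n%:R ^+ c)^-1 by near: n; exact: ne.
exact: le_trans fen (le_trans (ler_norm _) enc).
Unshelve. all: by end_near.
Qed.

Lemma negligibleD e f : negligible e -> negligible f -> negligible (fun n => e n + f n).
Proof.
move=> /negligibleE ne /negligibleE nf; apply/negligibleE => c; near=> n.
have n2 : 2 <= n%:R :> R by rewrite ler_nat; near: n; exact: nbhs_infty_ge.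
have enc : `|e n| <= (n%:R ^+ c.+1)^-1 by near: n; exact: ne.
have fnc : `|f n| <= (n%:R ^+ c.+1)^-1 by near: n; exact: nf.
have nc_gt0 : 0 < n%:R ^+ c :> R by rewrite exprn_gt0 //; lra.
apply: le_trans (ler_normD _ _) (le_trans (lerD enc fnc) _).
rewrite exprS invfM -mulrDl ler_piMl ?invr_ge0 ?(ltW nc_gt0) //.
have : (n%:R : R)^-1 <= 2^-1 by rewrite lef_pV2 ?posrE //; lra.
lra.
Unshelve. all: by end_near.
Qed.

Lemma negligibleMpoly (t : nat -> nat) e : poly_bounded t -> negligible e ->
  negligible (fun n => (t n)%:R * e n).
Proof.
move=> [d td] /negligibleE ne; apply/negligibleE => c; near=> n.
have n_gt : (d < n)%N by near: n.
have n_gt0 : (0 < n)%N := leq_ltn_trans (leq0n d) n_gt.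
have enc : `|e n| <= (n%:R ^+ (c + d.+1))^-1 by near: n; exact: ne.
have tn_le : (t n <= n ^ d.+1)%N.
  apply: leq_trans (td n) _; have : (1 <= n ^ d)%N by rewrite expn_gt0 n_gt0.
  by rewrite expnS; nia.
have tnR : (t n)%:R <= n%:R ^+ d.+1 :> R by rewrite -natrX ler_nat.
rewrite normrM ger0_norm //; apply: le_trans (ler_pM (ler0n _ _) (normr_ge0 _) tnR enc) _.
by rewrite exprD invfM mulrCA mulfV ?mulr1 // gt_eqF // exprn_gt0 // ltr0n.
Unshelve. all: by end_near.
Qed.

Lemma negligible_lt1 e : negligible e -> \forall n \near \oo, e n < 1.
Proof.
move=> /negligibleE /(_ 1%N) ne; near=> n.
have n2 : 2 <= n%:R :> R by rewrite ler_nat; near: n; exact: nbhs_infty_ge.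
have en : `|e n| <= (n%:R ^+ 1)^-1 by near: n.
have : (n%:R : R)^-1 <= 2^-1 by rewrite lef_pV2 ?posrE //; lra.
by move: (ler_norm (e n)); rewrite expr1 in en; lra.
Unshelve. all: by end_near.
Qed.

Lemma omega_log_gt0 (s : nat -> R) : omega_log s -> \forall n \near \oo, 0 < s n.
Proof.
move=> /(_ 1 ltr01) /eventuallyE sl; near=> n.
have n2 : (2 <= n)%N by near: n; exact: nbhs_infty_ge.
have lt_s : 1 * ln n%:R < s n by near: n.
by apply: le_lt_trans lt_s; rewrite mul1r ltW // ln_gt0 // ltr1n.
Unshelve. all: by end_near.
Qed.

Lemma negligible_expR_omega_log (s : nat -> R) : omega_log s ->
  negligible (fun n => expR (- (s n / 8))).
Proof.
move=> sl; apply/negligibleE => c.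
have /eventuallyE slc := sl (8 * c.+1%:R) (ltac:(by rewrite mulr_gt0 // ltr0n)).
near=> n.
have n1 : (1 <= n)%N by near: n; exact: nbhs_infty_ge.
have lt_s : 8 * c.+1%:R * ln n%:R < s n by near: n.
have ln_ge0 : 0 <= ln (n%:R : R) by rewrite ln_ge0 // ler1n.
rewrite ger0_norm ?expR_ge0 // -[n%:R in X in _ <= X]lnK ?posrE ?ltr0n //.
rewrite -expRM_natl -expRN ler_expR lerN2 ler_pdivlMr //.
rewrite -addn1 natrD in lt_s; nra.
Unshelve. all: by end_near.
Qed.

End Negligible.

Lemma card_bits l : #|bits l| = (2 ^ l)%N.
Proof. by rewrite card_tuple card_bool. Qed.

Lemma prob_log2_preim_tuple_lt (T U : finType) t l (F : T -> U) (k s : R) :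
  (0 < #|T|)%N -> (#|T| <= 2 ^ l)%N -> k <= cond_entropy (joint_unif F) -> 0 <= s ->
  prob (fun xs : t.-tuple T =>
          log2 (preim_card (fun ys : t.-tuple T => map_tuple F ys) xs)%:R
          < t%:R * k - l%:R * Num.sqrt (s * t%:R))
    <= expR (- (s / 8)).
Proof.
move=> T0 Tl kH s0; rewrite cond_entropy_joint_unif // in kH.
have w_le x : (preim_card F x <= 2 ^ l)%N := leq_trans (max_card _) Tl.
apply: le_trans (prob_log2_prod_lt t T0 (@preim_card_gt0 _ _ F) w_le s0).
apply: le_prob => xs /=; rewrite preim_card_map_tuple => lt_k.
by apply: lt_le_trans lt_k _; rewrite lerD2r ler_wpM2l.
Qed.

Lemma real_minent_direct_product (nt m t : nat -> nat)
    (F : forall n, bits (nt n) -> bits (m n)) (k s : nat -> R) :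
  real_shannon_ge F k -> omega_log s ->
  real_minent_ge (@direct_product nt m t F)
    (fun n => (t n)%:R * k n - (nt n)%:R * Num.sqrt (s n * (t n)%:R)).
Proof.
move=> kH sl; set K := fun n => _ - _.
pose good n (xs : tfold (t n) (bits (nt n))) :=
  K n <= log2 (preim_card (@direct_product nt m t F n) xs)%:R.
exists (fun n => 1 - prob (good n)); split; last by move=> n; lra.
apply: (negligible_le (negligible_expR_omega_log sl)); near=> n.
have s_gt0 : 0 < s n by near: n; exact: omega_log_gt0.
have bits0 : (0 < #|bits (nt n)|)%N by rewrite card_bits expn_gt0.
have tuples0 : (0 < #|tfold (t n) (bits (nt n))|)%N by rewrite card_tuple expn_gt0 bits0.
rewrite -probC // ger0_norm ?prob_ge0 //.
have tail := prob_log2_preim_tuple_lt (t n) bits0 (eq_leq (card_bits _)) (kH n) (ltW s_gt0).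
by apply: le_trans tail; apply: le_prob => xs; rewrite /good -ltNge.
Unshelve. all: by end_near.
Qed.

Definition capped_setX_tuple (T : finType) t (L : T -> {set T}) (K : R) (xs : t.-tuple T)
    : {set t.-tuple T} :=
  if (\prod_i #|L (tnth xs i)|)%N%:R <= 2 `^ K then setX_tuple (fun i => L (tnth xs i))
  else [set xs].

Section CappedSetX.
Variables (T : finType) (t : nat) (L : T -> {set T}).
Hypothesis L_refl : forall x, x \in L x.

Lemma capped_setX_tuple_refl K (xs : t.-tuple T) : xs \in capped_setX_tuple L K xs.
Proof.
rewrite /capped_setX_tuple; case: ifP => _; rewrite ?inE //.
by apply/forallP => i; exact: L_refl.
Qed.

Lemma card_capped_setX_tuple K (xs : t.-tuple T) :
  0 <= K -> #|capped_setX_tuple L K xs|%:R <= 2 `^ K.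
Proof.
rewrite /capped_setX_tuple => K0; case: ifP => [|_]; first by rewrite card_setX_tuple.
have two_ge1 : 1 <= 2 :> R by lra.
by rewrite cards1 (le_trans _ (ler_powR two_ge1 K0)) ?powRr0.
Qed.

Lemma prob_notin_capped_setX_tuple (C : finType) (run : t.-tuple T -> C -> t.-tuple T)
    l (k s : R) :
  (0 < #|T|)%N -> (0 < #|C|)%N -> (#|T| <= 2 ^ l)%N ->
  expect (fun x => log2 #|L x|%:R) <= k -> 0 <= s ->
  prob (fun p : t.-tuple T * C =>
          run p.1 p.2 \notin capped_setX_tuple L (t%:R * k + l%:R * Num.sqrt (s * t%:R)) p.1)
    <= expR (- (s / 8))
       + \sum_i prob (fun p : t.-tuple T * C => tnth (run p.1 p.2) i \notin L (tnth p.1 i)).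
Proof.
move=> T0 C0 Tl kH s0; set K := _ + _.
pose small (xs : t.-tuple T) := (\prod_i #|L (tnth xs i)|)%N%:R <= 2 `^ K.
apply: le_trans (@le_prob _ _ (fun p => ~~ small p.1
          || [exists i, tnth (run p.1 p.2) i \notin L (tnth p.1 i)]) _) _.
  move=> [xs r] /=; rewrite /capped_setX_tuple /small; case: ifP => //= _.
  by rewrite inE negb_forall.
apply: le_trans (probU _ _) (lerD _ (prob_bigU _)).
rewrite (prob_fst (fun xs => ~~ small xs)) //.
have w_gt0 x : (0 < #|L x|)%N by apply/card_gt0P; exists x.
have w_le x : (#|L x| <= 2 ^ l)%N := leq_trans (max_card _) Tl.
apply: le_trans (prob_log2_prod_gt t T0 w_gt0 w_le s0); apply: le_prob => xs /=.
rewrite /small -ltNge => /powR_lt_log2 lt_log; apply: le_lt_trans (lt_log _).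
  by rewrite lerD2r ler_wpM2l.
by rewrite ltr0n prodn_gt0.
Qed.

End CappedSetX.

Lemma sum_prob_coord_notin (T C : finType) t (run : t.-tuple T -> C -> t.-tuple T)
    (L : T -> {set T}) : (0 < #|T|)%N ->
  \sum_i prob (fun p : t.-tuple T * C => tnth (run p.1 p.2) i \notin L (tnth p.1 i))
  = t%:R * prob (fun q : T * ('I_t * (t.-tuple T * C)) =>
                   tnth (run (set_tnth q.2.2.1 q.2.1 q.1) q.2.2.2) q.2.1 \notin L q.1).
Proof.
case: t run => [|t] run T0; first by rewrite big_ord0 mul0r.
pose swap (q : T * ('I_t.+1 * (t.+1.-tuple T * C))) := (q.2.1, (q.1, q.2.2)).
have swap_bij : bijective swap by exists (fun q => (q.2.1, (q.1, q.2.2))) => -[? [? ?]].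
rewrite (prob_reindex (fun q : 'I_t.+1 * (T * (t.+1.-tuple T * C)) =>
  tnth (run (set_tnth q.2.2.1 q.1 q.2.1) q.2.2.2) q.1 \notin L q.2.1) swap_bij).
rewrite (prob_pair (fun i (q : T * (t.+1.-tuple T * C)) =>
  tnth (run (set_tnth q.2.1 i q.1) q.2.2) i \notin L q.1)) card_ord mulrC divfK //.
apply: eq_bigr => i _.
rewrite -(prob_set_tnth i (fun zs r => tnth (run zs r) i \notin L (tnth zs i)) T0).
by congr prob; apply: funext => q; rewrite /= tnth_set_tnth eqxx.
Qed.

Lemma embed_alg_collision_finder (nt m t : nat -> nat) (F : forall n, bits (nt n) -> bits (m n))
    (A : rand_alg (fun n => tfold (t n) (bits (nt n)))) :
  collision_finder (@direct_product nt m t F) A -> collision_finder F (embed_alg A).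
Proof.
move=> cfA n x [i [ys r]].
have := congr1 (fun zs => tnth zs i) (cfA n (set_tnth ys i x) r).
by rewrite /direct_product /= !tnth_map tnth_ord_tuple eqxx.
Qed.

Lemma acc_maxent_direct_product (nt m t : nat -> nat)
    (F : forall n, bits (nt n) -> bits (m n)) (Eff : eff_class) (k s : nat -> R) :
  poly_bounded t -> closed_under_embed Eff nt t -> acc_avg_maxent_le Eff F k ->
  omega_log s ->
  acc_maxent_le Eff (@direct_product nt m t F)
    (fun n => (t n)%:R * k n + (nt n)%:R * Num.sqrt (s n * (t n)%:R)).
Proof.
move=> t_poly Eff_embed kH sl A EffA cfA.
pose K n := (t n)%:R * k n + (nt n)%:R * Num.sqrt (s n * (t n)%:R).
have [L [eps [L_refl L_avg eps_negl [n0 succ]]]] :=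
  kH _ (Eff_embed A EffA) (embed_alg_collision_finder cfA).
have bits0 n : (0 < #|bits (nt n)|)%N by rewrite card_bits expn_gt0.
have K_ge0 n : 0 <= K n.
  rewrite addr_ge0 ?mulr_ge0 ?sqrtr_ge0 // (le_trans _ (L_avg n)) // expect_ge0 // => x.
  by rewrite log2_natr_ge0 //; apply/card_gt0P; exists x.
pose Lt n := @capped_setX_tuple _ (t n) (L n) (K n).
exists Lt, (fun n => 1 - succ_prob A Lt n); split => [n xs|n xs| |].
- exact: capped_setX_tuple_refl.
- exact: card_capped_setX_tuple.
- apply: (negligible_le (negligibleD (negligible_expR_omega_log sl)
                                    (negligibleMpoly t_poly eps_negl))); near=> n.
  have s_gt0 : 0 < s n by near: n; exact: omega_log_gt0.
  have eps_lt1 : eps n < 1 by near: n; exact: negligible_lt1.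
  have succ_n : 1 - eps n <= succ_prob (embed_alg A) L n by near: n; exists n0.
  have /prob_gt0_card embed0 : 0 < succ_prob (embed_alg A) L n by lra.
  have coins0 : (0 < #|coins A n|)%N.
    by move: embed0; rewrite !card_prod !muln_gt0 => /and4P [].
  have pairs0 : (0 < #|{: tfold (t n) (bits (nt n)) * coins A n}|)%N.
    by rewrite card_prod muln_gt0 coins0 card_tuple expn_gt0 bits0.
  rewrite /succ_prob -probC // ger0_norm ?prob_ge0 //.
  apply: le_trans (prob_notin_capped_setX_tuple (L_refl n) (@run _ A n) (bits0 n) coins0
                    (eq_leq (card_bits _)) (L_avg n) (ltW s_gt0)) _.
  rewrite lerD2l sum_prob_coord_notin // ler_wpM2l //.
  by rewrite (probC _ embed0); rewrite /succ_prob in succ_n; lra.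
- by exists 0%N => n _; lra.
Unshelve. all: by end_near.
Qed.

Theorem lemma5p3
  (nt m : nat -> nat) (F : forall n : nat, bits (nt n) -> bits (m n))
  (t : nat -> nat) (ht : poly_bounded t) :
  (* (i) *)
  (forall k : nat -> R,
     real_shannon_ge F k ->
     forall s : nat -> R, omega_log s -> (forall n, s n < (t n)%:R) ->
       real_minent_ge (@direct_product nt m t F)
         (fun n => (t n)%:R * k n - (nt n)%:R * Num.sqrt (s n * (t n)%:R)))
  /\
  (* (ii) *)
  (forall Eff : eff_class, closed_under_embed Eff nt t ->
   forall k : nat -> R,
     acc_avg_maxent_le Eff F k ->
     forall s : nat -> R, omega_log s ->
       acc_maxent_le Eff (@direct_product nt m t F)
         (fun n => (t n)%:R * k n + (nt n)%:R * Num.sqrt (s n * (t n)%:R))).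
Proof.
(* The Hoeffding bounds hold for every [t], so (i) does not need [s < t]. *)
split=> [k kH s sl _ | Eff Eff_embed k kH s sl].
  exact: real_minent_direct_product.
exact: acc_maxent_direct_product.
Qed.
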